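(* Let $\{\mathbf{k}^{(N)}\}_{N\ge1}$ be a sequence with $\mathbf{k}^{(N)}=(k_1^{(N)},\dots,k_N^{(N)})\in\Delta_N$, and let $\mathbf{k}\in\Delta_0$ be such that $\lim_{N\to\infty,N\ge j}k_j^{(N)}=k_j$ for every $j\ge1$. Then for every $i\ge1$, $l_i(\mathbf{k}^{(N)})\to l_i(\mathbf{k})$ and $\sum_{j=i}^\infty l_j(\mathbf{k}^{(N)})\to\sum_{j=i}^\infty l_j(\mathbf{k})$ as $N\to\infty$.
   Context: $\Delta_N=\{(k_1,\dots,k_N)\in(\mathbb{Z}\cup\{-\infty\})^N:k_1\ge\dots\ge k_N\}$; $\Delta_0=\{\mathbf{k}=(k_j)_{j\ge1}\in\mathbb{Z}_+^{\mathbb{N}}:k_1\ge k_2\ge\cdots,\ k_i=0\text{ for all large }i\}$, where $\mathbb{Z}_+=\{0,1,2,\dots\}$. For a finite or infinite sequence $\mathbf{k}$ and $i\in\mathbb{Z}\cup\{-\infty\}$, $l_i(\mathbf{k})=\#\{j:k_j=i\}$. *)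

From mathcomp Require Import all_boot all_order all_algebra.
Set Implicit Arguments. Unset Strict Implicit. Unset Printing Implicit Defensive.
Import Order.TTheory GRing.Theory Num.Theory.

(* Z ∪ {-oo} is represented by [option int]: [None] = -oo, [Some z] = z. *)
Definition le_zinf (x y : option int) : bool :=
  match x, y with
  | None, _ => true
  | Some _, None => false
  | Some a, Some b => (a <= b)%R
  end.

(* (k_1,...,k_N) ∈ Δ_N, with 0-based index: kv j = k_{j+1}. *)
Definition in_DeltaN (N : nat) (kv : 'I_N -> option int) : Prop :=
  forall a b : 'I_N, (a <= b)%N -> le_zinf (kv b) (kv a).

(* k ∈ Δ_0, with 0-based index: k j = k_{j+1}. *)
Definition in_Delta0 (k : nat -> nat) : Prop :=
  (forall a b, (a <= b)%N -> (k b <= k a)%N) /\ (exists M, forall j, (M <= j)%N -> k j = 0%N).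

Definition lN (N : nat) (kv : 'I_N -> option int) (i : int) : nat :=
  #|[set j : 'I_N | kv j == Some i]|.

Definition l_inf_is (k : nat -> nat) (i : nat) (n : nat) : Prop :=
  exists s : seq nat, [/\ uniq s, (forall j, j \in s <-> k j = i) & size s = n].

(* \sum_{j >= i} f j = S for a series of naturals (convergence of partial sums,
   which for naturals means eventual equality). *)
Definition nat_series_from (f : nat -> nat) (i S : nat) : Prop :=
  exists M, forall M', (M <= M')%N -> (\sum_(i <= j < M') f j)%N = S.

From mathcomp Require Import all_boot all_order all_algebra.
Import Order.TTheory GRing.Theory Num.Theory.

(* k vanishes from some index L on, so for i >= 1 only indices below L can
   carry the value i in k.  The same holds in k^(N) as soon as k^(N) agrees
   with k up to index L, since its later entries are then <= k_L = 0 by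
   monotonicity.  On these finitely many indices k^(N) is eventually equal to
   k, so l_i(k^(N)) = l_i(k) for large N, uniformly in i >= 1.  The tail sums
   are finite sums, as l_j vanishes for j > k_1 in both sequences. *)

Lemma eventually_forall_ltn (P : nat -> nat -> Prop) :
  (forall j, exists M, forall N, (M <= N)%N -> P j N) ->
  forall n, exists M, forall j N, (j < n)%N -> (M <= N)%N -> P j N.
Proof.
move=> evP; elim=> [|n [M HM]]; first by exists 0%N.
have [Mn HMn] := evP n.
exists (maxn M Mn) => j N; rewrite ltnS leq_eqVlt geq_max.
by case/orP=> [/eqP -> | jn] /andP[MN MnN]; [apply: HMn | apply: HM].
Qed.

Lemma l_inf_is_count (k : nat -> nat) (L i : nat) :
  (forall j, (L <= j)%N -> k j != i) ->
  l_inf_is k i (count (fun x => k x == i) (iota 0 L)).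
Proof.
move=> k_tail; exists [seq x <- iota 0 L | k x == i]; split.
- by rewrite filter_uniq // iota_uniq.
- move=> x; rewrite mem_filter mem_iota add0n; split=> [/andP[/eqP] //|kx].
  rewrite kx eqxx /=; case: ltnP => // /k_tail.
  by rewrite kx eqxx.
- by rewrite size_filter.
Qed.

Lemma lN_eq_count (N : nat) (kv : 'I_N -> option int) (k : nat -> nat) (L i : nat) :
  in_DeltaN kv -> (L < N)%N -> k L = 0%N -> (0 < i)%N ->
  (forall x (hx : (x < N)%N), (x <= L)%N -> kv (Ordinal hx) = Some (Posz (k x))) ->
  lN kv i = count (fun x => k x == i) (iota 0 L).
Proof.
move=> kv_dec LN kL0 i_gt0 kv_prefix.
have kv_tail (x : 'I_N) : (L <= x)%N -> kv x != Some (Posz i).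
  move=> Lx; have := kv_dec (Ordinal LN) x Lx.
  rewrite kv_prefix // kL0; case: (kv x) => [a|] //= a_le0.
  by apply: contraTneq a_le0 => -[->]; rewrite -ltNge ltz_nat.
have kv_eq (x : 'I_N) : (kv x == Some (Posz i)) = (k x == i) && (x < L)%N.
  case: (ltnP x L) => [xL | Lx]; last by rewrite andbF (negbTE (kv_tail x Lx)).
  case: x xL => x hx xL; rewrite andbT kv_prefix; last exact: ltnW.
  by apply/eqP/eqP => [[]|->].
rewrite /lN -sum1dep_card (eq_bigl _ _ kv_eq) -sum1_count.
rewrite -[in iota 0 L](subn0 L) big_mkord.
exact/esym/(big_ord_widen_cond N (fun x => k x == i) (fun=> 1%N))/ltnW.
Qed.

Lemma nat_series_from_support {g : nat -> nat} {K i : nat} :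
  (forall j, (K <= j)%N -> g j = 0%N) ->
  nat_series_from g i (\sum_(i <= j < maxn i K) g j)%N.
Proof.
move=> g_tail; exists (maxn i K) => M' hM'.
rewrite (@big_cat_nat _ _ _ (maxn i K)) ?leq_maxl //=.
rewrite [X in (_ + X)%N]big_nat_cond [X in (_ + X)%N]big1 ?addn0 //.
by move=> j /andP[/andP[Kj _] _]; apply: g_tail; apply: leq_trans Kj; rewrite leq_maxr.
Qed.

Lemma nat_series_from_eq {f g : nat -> nat} {i S : nat} :
  nat_series_from f i S -> (forall j, (i <= j)%N -> f j = g j) ->
  nat_series_from g i S.
Proof.
move=> [M HM] fg; exists M => M' hM'; rewrite -(HM M' hM').
by apply: eq_big_nat => j /andP[ij _]; rewrite fg.
Qed.

Theorem lemma3p10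
  (kseq : forall N : nat, 'I_N -> option int) (k : nat -> nat)
  (hkN : forall N : nat, in_DeltaN (kseq N))
  (hk : in_Delta0 k)
  (hlim : forall j : nat, exists M : nat, forall (N : nat) (hj : (j < N)%N),
       (M <= N)%N -> kseq N (Ordinal hj) = Some (Posz (k j))) :
  forall i : nat, (1 <= i)%N ->
    (exists n : nat, l_inf_is k i n /\
       exists M : nat, forall N : nat, (M <= N)%N -> lN (kseq N) (Posz i) = n)
    /\
    (exists S : nat,
       (exists f : nat -> nat, (forall j, (i <= j)%N -> l_inf_is k j (f j)) /\ nat_series_from f i S) /\
       exists M : nat, forall N : nat, (M <= N)%N ->
         nat_series_from (fun j => lN (kseq N) (Posz j)) i S).
Proof.
move=> i i_gt0; case: hk => [k_noninc [L k_vanish]].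
pose l j := count (fun x => k x == j) (iota 0 L).
have l_inf j : (0 < j)%N -> l_inf_is k j (l j).
  by move=> j_gt0; apply: l_inf_is_count => x /k_vanish ->; rewrite eq_sym -lt0n.
have l_eq0 j : (k 0).+1 <= j -> l j = 0%N.
  move=> kj; apply/eqP; rewrite -leqn0 leqNgt -has_count; apply/hasPn => x _.
  by rewrite neq_ltn (leq_ltn_trans (k_noninc 0%N x isT) kj).
have [M k_prefix] : exists M, forall j N, (j < L.+1)%N -> (M <= N)%N ->
    forall hj : (j < N)%N, kseq N (Ordinal hj) = Some (Posz (k j)).
  apply: (eventually_forall_ltn
    (fun j N => forall hj : (j < N)%N, kseq N (Ordinal hj) = Some (Posz (k j)))).
  by move=> j; have [M HM] := hlim j; exists M => N MN hj; apply: HM.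
have l_fin N j : (maxn M L.+1 <= N)%N -> (0 < j)%N -> lN (kseq N) j = l j.
  rewrite geq_max => /andP[MN LN] j_gt0.
  apply: lN_eq_count (hkN N) LN (k_vanish L (leqnn L)) j_gt0 _.
  by move=> x hx xL; apply: k_prefix.
split.
  exists (l i); split; first exact: l_inf.
  by exists (maxn M L.+1) => N /l_fin; apply.
exists (\sum_(i <= j < maxn i (k 0).+1) l j)%N; split.
  exists l; split; last exact: nat_series_from_support l_eq0.
  by move=> j ij; apply/l_inf/(leq_trans i_gt0 ij).
exists (maxn M L.+1) => N MN.
apply: nat_series_from_eq (nat_series_from_support l_eq0) _ => j ij.
by rewrite l_fin // (leq_trans i_gt0 ij).
Qed.
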